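(* Let $\alpha,\beta>0$, let $c(\psi)=\sqrt{\alpha\cos^2\psi+\beta\sin^2\psi}$, let $p\ge0$ be an integer, and let $X_{\Delta x}^p(\Omega)$ be the discontinuous piecewise polynomial space on the periodic mesh described in the context. Suppose $v,w,\psi:[0,T]\to X_{\Delta x}^p(\Omega)$ are differentiable in time and, for every $t\in[0,T]$, satisfy (with $c=c(\psi(x,t))$ inside integrals, $x$-derivatives taken cellwise, sums over $j=1,\dots,N$) $$\sum_j\int_{\Omega_j}v_t\phi\,dx+\sum_j\int_{\Omega_j}c\,w\phi_x\,dx-\sum_j\overline{c}_{j+1/2}\overline{w}_{j+1/2}\phi^-_{j+1/2}+\sum_j\overline{c}_{j-1/2}\overline{w}_{j-1/2}\phi^+_{j-1/2}=\sum_j\int_{\Omega_j}c\,(w\phi)_x\,dx-\sum_j\overline{c}_{j+1/2}w^-_{j+1/2}\phi^-_{j+1/2}+\sum_j\overline{c}_{j-1/2}w^+_{j-1/2}\phi^+_{j-1/2},$$ $$\sum_j\int_{\Omega_j}w_t\eta\,dx+\sum_j\int_{\Omega_j}c\,v\eta_x\,dx-\sum_j\overline{c}_{j+1/2}\overline{v}_{j+1/2}\eta^-_{j+1/2}+\sum_j\overline{c}_{j-1/2}\overline{v}_{j-1/2}\eta^+_{j-1/2}=0,$$ $$\sum_j\int_{\Omega_j}\psi_t\zeta\,dx=\sum_j\int_{\Omega_j}v\zeta\,dx,$$ for all $\phi,\eta,\zeta\in X_{\Delta x}^p(\Omega)$. Then $$\frac{d}{dt}\left(\sum_{j=1}^N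\int_{\Omega_j}(v^2+w^2)\,dx\right)=0.$$
   Context: The domain $\Omega$ is partitioned into cells $\Omega_j=[x_{j-1/2},x_{j+1/2}]$, $j=1,\dots,N$. $X_{\Delta x}^p(\Omega)=\{u\in L^2(\Omega): u|_{\Omega_j}$ is a polynomial of degree $\le p$ for each $j\}$. For a grid function $u$, $u^+_{j+1/2}$ and $u^-_{j+1/2}$ denote its traces at $x_{j+1/2}$ from the right and left respectively; $\overline{u}_{j+1/2}=(u^+_{j+1/2}+u^-_{j+1/2})/2$ and $\llbracket u\rrbracket_{j+1/2}=u^+_{j+1/2}-u^-_{j+1/2}$. Also $c^\pm_{j+1/2}=c(\psi^\pm_{j+1/2})$ and $\overline{c}_{j+1/2}=(c^+_{j+1/2}+c^-_{j+1/2})/2$. Periodic boundary conditions: the endpoints $x_{1/2}$ and $x_{N+1/2}$ are identified, i.e. $u^-_{1/2}:=u^-_{N+1/2}$ (trace from cell $N$) and $u^+_{N+1/2}:=u^+_{1/2}$ (trace from cell $1$), for all grid functions including $\psi$ and the test functions. *)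

From Stdlib Require Import Reals Lra List Arith.
From Coquelicot Require Import Coquelicot.
Open Scope R_scope.

Definition cfun (alpha beta y : R) : R :=
  sqrt (alpha * (cos y) ^ 2 + beta * (sin y) ^ 2).

(* Mesh: N cells, nodes xs i = x_{i+1/2}, i = 0..N; cell j (1<=j<=N) is
   Omega_j = [xs (j-1), xs j]. *)

(* A grid function in X^p is given by coefficients u j k (cell j, power k);
   on cell j it equals the polynomial  sum_{k=0}^p u j k x^k. *)
Definition pe (p : nat) (u : nat -> nat -> R) (j : nat) (x : R) : R :=
  sum_f_R0 (fun k => u j k * x ^ k) p.

Definition sumj (N : nat) (F : nat -> R) : R :=
  fold_right Rplus 0 (map F (seq 1 N)).

Definition cellint (xs : nat -> R) (j : nat) (f : R -> R) : R :=
  RInt f (xs (j - 1)%nat) (xs j).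

(* traces at interface x_{i+1/2}, i = 0..N, with periodic identification *)
Definition trR (N p : nat) (xs : nat -> R) (u : nat -> nat -> R) (i : nat) : R :=
  if Nat.eqb i N then pe p u 1 (xs 0%nat) else pe p u (S i) (xs i).
Definition trL (N p : nat) (xs : nat -> R) (u : nat -> nat -> R) (i : nat) : R :=
  if Nat.eqb i 0 then pe p u N (xs N) else pe p u i (xs i).
Definition avg (N p : nat) (xs : nat -> R) (u : nat -> nat -> R) (i : nat) : R :=
  (trR N p xs u i + trL N p xs u i) / 2.
Definition cbar (alpha beta : R) (N p : nat) (xs : nat -> R)
  (psi : nat -> nat -> R) (i : nat) : R :=
  (cfun alpha beta (trR N p xs psi i) + cfun alpha beta (trL N p xs psi i)) / 2.

Definition deriv_within (a b : R) (f : R -> R) (t l : R) : Prop :=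
  forall eps, 0 < eps -> exists delta, 0 < delta /\
    forall s, a <= s <= b -> Rabs (s - t) < delta ->
      Rabs (f s - f t - l * (s - t)) <= eps * Rabs (s - t).

From Stdlib Require Import Reals Lra Lia List.
From Coquelicot Require Import Coquelicot.
Open Scope R_scope.

(* Test the v-equation with phi = v and the w-equation with eta = w and add.  The
   cell terms combine by the product rule, c w v_x + c v w_x = c (w v)_x, into the
   cell term of the right-hand side; after periodic reindexing of the interfaces the
   central fluxes avg(w)[v] + avg(v)[w] equal the jump [w v], which cancels the
   interface terms of the right-hand side.  Hence sum_j int (v_t v + w_t w) = 0.  On
   each cell the energy is a quadratic form in the polynomial coefficients whose
   matrix (the moments int x^(k+l)) is independent of time, so its time derivative
   is 2 sum_j int (v_t v + w_t w) = 0. *)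

Lemma continuous_pow_comp (f : R -> R) (n : nat) (x : R) :
  continuous f x -> continuous (fun y => f y ^ n) x.
Proof.
  intros Hf. apply (continuous_comp f (fun z => z ^ n)); [exact Hf|].
  apply (ex_derive_continuous (K:=R_AbsRing) (V:=R_NormedModule)). auto_derive. auto.
Qed.

Lemma continuous_sum_f_R0 (n : nat) (g : nat -> R -> R) (x : R) :
  (forall k, continuous (g k) x) -> continuous (fun y => sum_f_R0 (fun k => g k y) n) x.
Proof.
  intros H. induction n as [|n IH]; simpl; [apply H|].
  apply (continuous_plus (fun y => sum_f_R0 (fun k => g k y) n) (g (S n))); auto.
Qed.

Lemma continuous_scal_pow (a : R) (n : nat) (x : R) : continuous (fun y => a * y ^ n) x.
Proof.
  apply (continuous_mult (fun _ => a)); [apply continuous_const|].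
  apply (continuous_pow_comp (fun y => y)), continuous_id.
Qed.

Lemma is_derive_pe (p : nat) (u : nat -> nat -> R) (j : nat) (x : R) :
  is_derive (pe p u j) x (sum_f_R0 (fun k => u j k * (INR k * x ^ pred k)) p).
Proof.
  unfold pe. rewrite <- sum_n_Reals.
  apply (is_derive_ext (fun y => sum_n (fun k => u j k * y ^ k) p)).
  { intros y. apply sum_n_Reals. }
  apply (is_derive_sum_n (V:=R_NormedModule) (fun k y => u j k * y ^ k)).
  intros k _. auto_derive; auto. ring.
Qed.

Lemma ex_derive_pe (p : nat) (u : nat -> nat -> R) (j : nat) (x : R) :
  ex_derive (pe p u j) x.
Proof. eexists. apply is_derive_pe. Qed.

Lemma continuous_pe (p : nat) (u : nat -> nat -> R) (j : nat) (x : R) :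
  continuous (pe p u j) x.
Proof. apply (ex_derive_continuous (K:=R_AbsRing) (V:=R_NormedModule)), ex_derive_pe. Qed.

Lemma continuous_Derive_pe (p : nat) (u : nat -> nat -> R) (j : nat) (x : R) :
  continuous (Derive (pe p u j)) x.
Proof.
  apply (continuous_ext (fun y => sum_f_R0 (fun k => u j k * INR k * y ^ pred k) p)).
  { intros y. rewrite (is_derive_unique _ _ _ (is_derive_pe p u j y)).
    apply sum_eq. intros k _. ring. }
  apply continuous_sum_f_R0. intros k. apply continuous_scal_pow.
Qed.

Lemma continuous_cfun_pe (alpha beta : R) (p : nat) (u : nat -> nat -> R) (j : nat) (x : R) :
  continuous (fun y => cfun alpha beta (pe p u j y)) x.
Proof.
  unfold cfun. apply continuous_sqrt_comp.
  apply (continuous_plus (fun y => alpha * cos (pe p u j y) ^ 2)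
                         (fun y => beta * sin (pe p u j y) ^ 2)).
  - apply (continuous_mult (fun _ => alpha)); [apply continuous_const|].
    apply (continuous_pow_comp (fun y => cos (pe p u j y))).
    apply continuous_cos_comp, continuous_pe.
  - apply (continuous_mult (fun _ => beta)); [apply continuous_const|].
    apply (continuous_pow_comp (fun y => sin (pe p u j y))).
    apply continuous_sin_comp, continuous_pe.
Qed.

Lemma ex_RInt_continuous_everywhere (f : R -> R) (a b : R) :
  (forall x, continuous f x) -> ex_RInt f a b.
Proof. intros H. apply (ex_RInt_continuous (V:=R_CompleteNormedModule)). auto. Qed.

Lemma RInt_plus_continuous (f g : R -> R) (a b : R) :
  (forall x, continuous f x) -> (forall x, continuous g x) ->
  RInt (fun x => f x + g x) a b = RInt f a b + RInt g a b.
Proof. intros Hf Hg. apply (RInt_plus f g); apply ex_RInt_continuous_everywhere; auto. Qed.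

Lemma RInt_scal_continuous (c : R) (f : R -> R) (a b : R) :
  (forall x, continuous f x) -> RInt (fun x => c * f x) a b = c * RInt f a b.
Proof. intros H. apply (RInt_scal f a b c), ex_RInt_continuous_everywhere, H. Qed.

Lemma RInt_sum_f_R0 (n : nat) (g : nat -> R -> R) (a b : R) :
  (forall k x, continuous (g k) x) ->
  RInt (fun x => sum_f_R0 (fun k => g k x) n) a b = sum_f_R0 (fun k => RInt (g k) a b) n.
Proof.
  intros H. induction n as [|n IH]; simpl; [reflexivity|].
  rewrite RInt_plus_continuous, IH; auto.
  intros x. apply continuous_sum_f_R0. auto.
Qed.

Lemma RInt_pe_mult (p : nat) (u z : nat -> nat -> R) (j : nat) (a b : R) :
  RInt (fun x => pe p u j x * pe p z j x) a b
  = sum_f_R0 (fun k => sum_f_R0 (fun l =>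
      u j k * z j l * RInt (fun x => x ^ (k + l)) a b) p) p.
Proof.
  rewrite (RInt_ext _ (fun x => sum_f_R0 (fun k => sum_f_R0 (fun l =>
             u j k * z j l * x ^ (k + l)) p) p)).
  2:{ intros x _. unfold pe. rewrite Rmult_comm, scal_sum. apply sum_eq. intros k _.
      rewrite scal_sum. apply sum_eq. intros l _. rewrite pow_add. ring. }
  rewrite RInt_sum_f_R0.
  2:{ intros k x. apply continuous_sum_f_R0. intros l. apply continuous_scal_pow. }
  apply sum_eq. intros k _. rewrite RInt_sum_f_R0.
  2:{ intros l x. apply continuous_scal_pow. }
  apply sum_eq. intros l _. apply RInt_scal_continuous.
  intros x. apply (continuous_pow_comp (fun y => y)), continuous_id.
Qed.

Section DerivWithin.
Variables a b : R.

Lemma deriv_within_congr (f g : R -> R) (t l m : R) :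
  (forall s, f s = g s) -> l = m -> deriv_within a b f t l -> deriv_within a b g t m.
Proof.
  intros E <- H eps He. destruct (H eps He) as [d [Hd Hs]]. exists d; split; auto.
  intros s H1 H2. rewrite <- !E. auto.
Qed.

Lemma deriv_within_const (c t : R) : deriv_within a b (fun _ => c) t 0.
Proof.
  intros eps He. exists 1. split; [lra|]. intros s _ _.
  replace (c - c - 0 * (s - t)) with 0 by ring. rewrite Rabs_R0.
  apply Rmult_le_pos; [lra|apply Rabs_pos].
Qed.

Lemma deriv_within_plus (f g : R -> R) (t lf lg : R) :
  deriv_within a b f t lf -> deriv_within a b g t lg ->
  deriv_within a b (fun s => f s + g s) t (lf + lg).
Proof.
  intros Hf Hg eps He.
  destruct (Hf (eps / 2)) as [d1 [Hd1 H1]]; [lra|].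
  destruct (Hg (eps / 2)) as [d2 [Hd2 H2]]; [lra|].
  exists (Rmin d1 d2). split; [apply Rmin_pos; auto|].
  intros s Hs Hst.
  specialize (H1 s Hs (Rlt_le_trans _ _ _ Hst (Rmin_l _ _))).
  specialize (H2 s Hs (Rlt_le_trans _ _ _ Hst (Rmin_r _ _))).
  replace (f s + g s - (f t + g t) - (lf + lg) * (s - t)) with
    ((f s - f t - lf * (s - t)) + (g s - g t - lg * (s - t))) by ring.
  eapply Rle_trans; [apply Rabs_triang|]. lra.
Qed.

Lemma deriv_within_locally_lipschitz (f : R -> R) (t l : R) :
  deriv_within a b f t l -> exists d, 0 < d /\
    forall s, a <= s <= b -> Rabs (s - t) < d ->
      Rabs (f s - f t) <= (Rabs l + 1) * Rabs (s - t).
Proof.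
  intros Hf. destruct (Hf 1 Rlt_0_1) as [d [Hd H]]. exists d. split; auto.
  intros s Hs Hst. specialize (H s Hs Hst).
  replace (f s - f t) with ((f s - f t - l * (s - t)) + l * (s - t)) by ring.
  eapply Rle_trans; [apply Rabs_triang|]. rewrite Rabs_mult. lra.
Qed.

(* With [X], [Y] the linearization errors of [f], [g], the error of [f g] is
   [X g t + f t Y + (f s - f t) (g s - g t)], and the last term is quadratic in [s - t]. *)
Lemma deriv_within_mult (f g : R -> R) (t lf lg : R) :
  deriv_within a b f t lf -> deriv_within a b g t lg ->
  deriv_within a b (fun s => f s * g s) t (lf * g t + f t * lg).
Proof.
  intros Hf Hg eps He.
  set (F := Rabs (f t) + 1). set (G := Rabs (g t) + 1).
  set (L := (Rabs lf + 1) * (Rabs lg + 1)).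
  assert (HF : 0 < F) by (pose proof (Rabs_pos (f t)); unfold F; lra).
  assert (HG : 0 < G) by (pose proof (Rabs_pos (g t)); unfold G; lra).
  assert (HL : 0 < L) by (pose proof (Rabs_pos lf); pose proof (Rabs_pos lg); unfold L; nra).
  destruct (Hf (eps / (3 * G))) as [d1 [Hd1 H1]]; [apply Rdiv_lt_0_compat; lra|].
  destruct (Hg (eps / (3 * F))) as [d2 [Hd2 H2]]; [apply Rdiv_lt_0_compat; lra|].
  destruct (deriv_within_locally_lipschitz f t lf Hf) as [d3 [Hd3 H3]].
  destruct (deriv_within_locally_lipschitz g t lg Hg) as [d4 [Hd4 H4]].
  set (d5 := eps / (3 * L)).
  assert (Hd5 : 0 < d5) by (apply Rdiv_lt_0_compat; lra).
  exists (Rmin (Rmin d1 d2) (Rmin (Rmin d3 d4) d5)).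
  split; [repeat apply Rmin_pos; auto|].
  intros s Hs Hst.
  pose proof (Rmin_l (Rmin d1 d2) (Rmin (Rmin d3 d4) d5)).
  pose proof (Rmin_r (Rmin d1 d2) (Rmin (Rmin d3 d4) d5)).
  pose proof (Rmin_l d1 d2). pose proof (Rmin_r d1 d2).
  pose proof (Rmin_l (Rmin d3 d4) d5). pose proof (Rmin_r (Rmin d3 d4) d5).
  pose proof (Rmin_l d3 d4). pose proof (Rmin_r d3 d4).
  specialize (H1 s Hs ltac:(lra)). specialize (H2 s Hs ltac:(lra)).
  specialize (H3 s Hs ltac:(lra)). specialize (H4 s Hs ltac:(lra)).
  set (h := Rabs (s - t)) in *.
  assert (Hh : 0 <= h) by apply Rabs_pos.
  replace (f s * g s - f t * g t - (lf * g t + f t * lg) * (s - t)) with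
    ((f s - f t - lf * (s - t)) * g t + f t * (g s - g t - lg * (s - t))
     + (f s - f t) * (g s - g t)) by ring.
  assert (B1 : Rabs ((f s - f t - lf * (s - t)) * g t) <= eps / 3 * h).
  { rewrite Rabs_mult.
    replace (eps / 3 * h) with (eps / (3 * G) * h * G) by (field; lra).
    apply Rmult_le_compat; try apply Rabs_pos; auto. unfold G; lra. }
  assert (B2 : Rabs (f t * (g s - g t - lg * (s - t))) <= eps / 3 * h).
  { rewrite Rabs_mult, Rmult_comm.
    replace (eps / 3 * h) with (eps / (3 * F) * h * F) by (field; lra).
    apply Rmult_le_compat; try apply Rabs_pos; auto. unfold F; lra. }
  assert (B3 : Rabs ((f s - f t) * (g s - g t)) <= eps / 3 * h).
  { rewrite Rabs_mult.
    apply Rle_trans with ((Rabs lf + 1) * h * ((Rabs lg + 1) * h)).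
    { apply Rmult_le_compat; try apply Rabs_pos; auto. }
    replace ((Rabs lf + 1) * h * ((Rabs lg + 1) * h)) with (L * h * h) by (unfold L; ring).
    replace (eps / 3 * h) with (L * d5 * h) by (unfold d5; field; lra).
    apply Rmult_le_compat_r; [lra|]. apply Rmult_le_compat_l; lra. }
  eapply Rle_trans; [apply Rabs_triang|].
  eapply Rle_trans; [apply Rplus_le_compat_r, Rabs_triang|]. lra.
Qed.

Lemma deriv_within_sum_f_R0 (n : nat) (F : nat -> R -> R) (d : nat -> R) (t : R) :
  (forall k, (k <= n)%nat -> deriv_within a b (F k) t (d k)) ->
  deriv_within a b (fun s => sum_f_R0 (fun k => F k s) n) t (sum_f_R0 d n).
Proof.
  intros H. induction n as [|n IH]; simpl; [apply H; lia|].
  apply (deriv_within_plus (fun s => sum_f_R0 (fun k => F k s) n) (F (S n))).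
  - apply IH. intros; apply H; lia.
  - apply H; lia.
Qed.

Lemma deriv_within_sumj (N : nat) (F : nat -> R -> R) (d : nat -> R) (t : R) :
  (forall j, (1 <= j <= N)%nat -> deriv_within a b (F j) t (d j)) ->
  deriv_within a b (fun s => sumj N (fun j => F j s)) t (sumj N d).
Proof.
  unfold sumj. intros H.
  assert (Hin : forall j, In j (seq 1 N) -> deriv_within a b (F j) t (d j)).
  { intros j Hj. apply in_seq in Hj. apply H. lia. }
  induction (seq 1 N) as [|j l IH]; simpl; [apply deriv_within_const|].
  apply (deriv_within_plus (F j) (fun s => fold_right Rplus 0 (map (fun j => F j s) l))).
  - apply Hin; simpl; auto.
  - apply IH. intros; apply Hin; simpl; auto.
Qed.

End DerivWithin.

Lemma sumj_plus (N : nat) (f g : nat -> R) :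
  sumj N (fun j => f j + g j) = sumj N f + sumj N g.
Proof. unfold sumj. induction (seq 1 N) as [|x l IH]; simpl; [ring|rewrite IH; ring]. Qed.

Lemma sumj_minus (N : nat) (f g : nat -> R) :
  sumj N (fun j => f j - g j) = sumj N f - sumj N g.
Proof. unfold sumj. induction (seq 1 N) as [|x l IH]; simpl; [ring|rewrite IH; ring]. Qed.

Lemma sumj_scal (N : nat) (c : R) (f : nat -> R) :
  sumj N (fun j => c * f j) = c * sumj N f.
Proof. unfold sumj. induction (seq 1 N) as [|x l IH]; simpl; [ring|rewrite IH; ring]. Qed.

Lemma sumj_eq0 (N : nat) (f : nat -> R) : (forall j, f j = 0) -> sumj N f = 0.
Proof. intros H. unfold sumj. induction (seq 1 N) as [|x l IH]; simpl; [ring|rewrite IH, H; ring]. Qed.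

Lemma sumj_ext (N : nat) (f g : nat -> R) :
  (forall j, (1 <= j <= N)%nat -> f j = g j) -> sumj N f = sumj N g.
Proof.
  intros H. unfold sumj. f_equal. apply map_ext_in. intros j Hj.
  apply in_seq in Hj. apply H. lia.
Qed.

Lemma sumj_shift (N : nat) (X : nat -> R) :
  X 0%nat = X N -> sumj N (fun j => X (j - 1)%nat) = sumj N X.
Proof.
  intros H0. unfold sumj.
  replace (map (fun j => X (j - 1)%nat) (seq 1 N)) with (map X (seq 0 N)).
  2:{ rewrite <- seq_shift, map_map. apply map_ext. intros; f_equal; lia. }
  destruct N as [|M]; [reflexivity|].
  rewrite (seq_S M 1), <- cons_seq, map_app, fold_right_app. simpl.
  rewrite H0. generalize (map X (seq 1 M)) as l. intros l.
  assert (Hc : forall c, fold_right Rplus c l = fold_right Rplus 0 l + c).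
  { induction l as [|x l IH]; intros c; simpl; [ring|rewrite IH; ring]. }
  rewrite (Hc (X (S M) + 0)). ring.
Qed.

Lemma deriv_within_RInt_pe_sqr (a b lo hi t : R) (p j : nat)
    (u : R -> nat -> nat -> R) (du : nat -> nat -> R) :
  (forall k, (k <= p)%nat -> deriv_within a b (fun s => u s j k) t (du j k)) ->
  deriv_within a b (fun s => RInt (fun x => pe p (u s) j x ^ 2) lo hi) t
    (2 * RInt (fun x => pe p du j x * pe p (u t) j x) lo hi).
Proof.
  intros Hu.
  apply (deriv_within_congr a b (fun s => sum_f_R0 (fun k => sum_f_R0 (fun l =>
           u s j k * u s j l * RInt (fun x => x ^ (k + l)) lo hi) p) p) _ t
           (sum_f_R0 (fun k => sum_f_R0 (fun l =>
              ((du j k * u t j l + u t j k * du j l) * RInt (fun x => x ^ (k + l)) lo hi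
               + u t j k * u t j l * 0)) p) p)).
  { intros s. rewrite <- RInt_pe_mult. apply RInt_ext. intros x _. simpl. ring. }
  { rewrite <- Rplus_diag.
    rewrite (RInt_ext _ (fun x => pe p (u t) j x * pe p du j x)) at 2
      by (intros x _; simpl; ring).
    rewrite !RInt_pe_mult, <- sum_plus. apply sum_eq. intros k _.
    rewrite <- sum_plus. apply sum_eq. intros l _. ring. }
  apply deriv_within_sum_f_R0. intros k Hk.
  apply deriv_within_sum_f_R0. intros l Hl.
  apply (deriv_within_mult a b (fun s => u s j k * u s j l)
           (fun _ => RInt (fun x => x ^ (k + l)) lo hi)); [|apply deriv_within_const].
  apply deriv_within_mult; auto.
Qed.

Lemma trR_periodic (N p : nat) (xs : nat -> R) (u : nat -> nat -> R) :
  (0 < N)%nat -> trR N p xs u 0 = trR N p xs u N.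
Proof. intros HN. unfold trR. rewrite Nat.eqb_refl. destruct N; [lia|reflexivity]. Qed.

Lemma trL_periodic (N p : nat) (xs : nat -> R) (u : nat -> nat -> R) :
  (0 < N)%nat -> trL N p xs u 0 = trL N p xs u N.
Proof. intros HN. unfold trL. destruct N; [lia|reflexivity]. Qed.

Lemma avg_periodic (N p : nat) (xs : nat -> R) (u : nat -> nat -> R) :
  (0 < N)%nat -> avg N p xs u 0 = avg N p xs u N.
Proof. intros HN. unfold avg. rewrite trR_periodic, trL_periodic by exact HN. reflexivity. Qed.

Lemma cbar_periodic (alpha beta : R) (N p : nat) (xs : nat -> R) (psi : nat -> nat -> R) :
  (0 < N)%nat -> cbar alpha beta N p xs psi 0 = cbar alpha beta N p xs psi N.
Proof. intros HN. unfold cbar. rewrite trR_periodic, trL_periodic by exact HN. reflexivity. Qed.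

Section EnergyBalance.
Variables (alpha beta : R) (N p : nat) (xs : nat -> R).
Variables V W Vt Wt Psi : nat -> nat -> R.
Hypothesis HN : (0 < N)%nat.

Local Notation c j x := (cfun alpha beta (pe p Psi j x)).
Local Notation cb := (cbar alpha beta N p xs Psi).
Local Notation tr_r := (trR N p xs).
Local Notation tr_l := (trL N p xs).
Local Notation mean := (avg N p xs).
Local Notation mass u z := (sumj N (fun j => cellint xs j (fun x => pe p u j x * pe p z j x))).

Hypothesis scheme_v_tested_with_V :
  mass Vt V
  + sumj N (fun j => cellint xs j (fun x => c j x * pe p W j x * Derive (fun y => pe p V j y) x))
  - sumj N (fun j => cb j * mean W j * tr_l V j)
  + sumj N (fun j => cb (j - 1)%nat * mean W (j - 1)%nat * tr_r V (j - 1)%nat)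
  = sumj N (fun j => cellint xs j (fun x => c j x * Derive (fun y => pe p W j y * pe p V j y) x))
  - sumj N (fun j => cb j * tr_l W j * tr_l V j)
  + sumj N (fun j => cb (j - 1)%nat * tr_r W (j - 1)%nat * tr_r V (j - 1)%nat).

Hypothesis scheme_w_tested_with_W :
  mass Wt W
  + sumj N (fun j => cellint xs j (fun x => c j x * pe p V j x * Derive (fun y => pe p W j y) x))
  - sumj N (fun j => cb j * mean V j * tr_l W j)
  + sumj N (fun j => cb (j - 1)%nat * mean V (j - 1)%nat * tr_r W (j - 1)%nat)
  = 0.

Lemma cell_terms_product_rule :
  sumj N (fun j => cellint xs j (fun x => c j x * pe p W j x * Derive (fun y => pe p V j y) x))
  + sumj N (fun j => cellint xs j (fun x => c j x * pe p V j x * Derive (fun y => pe p W j y) x))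
  = sumj N (fun j => cellint xs j (fun x => c j x * Derive (fun y => pe p W j y * pe p V j y) x)).
Proof.
  rewrite <- sumj_plus. apply sumj_ext. intros j _. unfold cellint.
  assert (Hcont : forall (u z : nat -> nat -> R) x,
            continuous (fun y => c j y * pe p u j y * Derive (pe p z j) y) x).
  { intros u z x.
    apply (continuous_mult (fun y => c j y * pe p u j y)); [|apply continuous_Derive_pe].
    apply (continuous_mult (fun y => c j y)); [apply continuous_cfun_pe|apply continuous_pe]. }
  rewrite <- RInt_plus_continuous by apply Hcont.
  apply RInt_ext. intros x _.
  rewrite Derive_mult by apply ex_derive_pe. simpl.
  change (fun y => pe p V j y) with (pe p V j).
  change (fun y => pe p W j y) with (pe p W j). ring.
Qed.

Lemma mass_rate_vanishes : mass Vt V + mass Wt W = 0.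
Proof.
  rewrite (sumj_shift N (fun i => cb i * mean W i * tr_r V i)) in scheme_v_tested_with_V
    by (rewrite cbar_periodic, avg_periodic, trR_periodic by exact HN; reflexivity).
  rewrite (sumj_shift N (fun i => cb i * tr_r W i * tr_r V i)) in scheme_v_tested_with_V
    by (rewrite cbar_periodic, !trR_periodic by exact HN; reflexivity).
  rewrite (sumj_shift N (fun i => cb i * mean V i * tr_r W i)) in scheme_w_tested_with_W
    by (rewrite cbar_periodic, avg_periodic, trR_periodic by exact HN; reflexivity).
  assert (flux_cancel : sumj N (fun i =>
      cb i * mean W i * tr_r V i - cb i * mean W i * tr_l V i
      + (cb i * mean V i * tr_r W i - cb i * mean V i * tr_l W i)
      - (cb i * tr_r W i * tr_r V i - cb i * tr_l W i * tr_l V i)) = 0).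
  { apply sumj_eq0. intros i. unfold avg. field. }
  rewrite !sumj_minus, !sumj_plus, !sumj_minus in flux_cancel.
  pose proof cell_terms_product_rule. lra.
Qed.

End EnergyBalance.

Theorem proposition2p3
  (alpha beta T : R) (p N : nat) (xs : nat -> R)
  (v w psi vt wt psit : R -> nat -> nat -> R) :
  0 < alpha -> 0 < beta -> 0 < T -> (0 < N)%nat ->
  (forall i, (i < N)%nat -> xs i < xs (S i)) ->
  (forall t j k, 0 <= t <= T -> (1 <= j <= N)%nat -> (k <= p)%nat ->
     deriv_within 0 T (fun s => v s j k) t (vt t j k) /\
     deriv_within 0 T (fun s => w s j k) t (wt t j k) /\
     deriv_within 0 T (fun s => psi s j k) t (psit t j k)) ->
  (forall t, 0 <= t <= T ->
   let c := fun j x => cfun alpha beta (pe p (psi t) j x) in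
   let cb := cbar alpha beta N p xs (psi t) in
   (forall phi : nat -> nat -> R,
      sumj N (fun j => cellint xs j (fun x => pe p (vt t) j x * pe p phi j x))
      + sumj N (fun j => cellint xs j (fun x =>
            c j x * pe p (w t) j x * Derive (fun y => pe p phi j y) x))
      - sumj N (fun j => cb j * avg N p xs (w t) j * trL N p xs phi j)
      + sumj N (fun j => cb (j - 1)%nat * avg N p xs (w t) (j - 1)%nat
                         * trR N p xs phi (j - 1)%nat)
      = sumj N (fun j => cellint xs j (fun x =>
            c j x * Derive (fun y => pe p (w t) j y * pe p phi j y) x))
      - sumj N (fun j => cb j * trL N p xs (w t) j * trL N p xs phi j)
      + sumj N (fun j => cb (j - 1)%nat * trR N p xs (w t) (j - 1)%nat
                         * trR N p xs phi (j - 1)%nat)) /\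
   (forall eta : nat -> nat -> R,
      sumj N (fun j => cellint xs j (fun x => pe p (wt t) j x * pe p eta j x))
      + sumj N (fun j => cellint xs j (fun x =>
            c j x * pe p (v t) j x * Derive (fun y => pe p eta j y) x))
      - sumj N (fun j => cb j * avg N p xs (v t) j * trL N p xs eta j)
      + sumj N (fun j => cb (j - 1)%nat * avg N p xs (v t) (j - 1)%nat
                         * trR N p xs eta (j - 1)%nat)
      = 0) /\
   (forall zeta : nat -> nat -> R,
      sumj N (fun j => cellint xs j (fun x => pe p (psit t) j x * pe p zeta j x))
      = sumj N (fun j => cellint xs j (fun x => pe p (v t) j x * pe p zeta j x)))) ->
  forall t, 0 <= t <= T ->
    deriv_within 0 T
      (fun s => sumj N (fun j => cellint xs j (fun x =>
                  (pe p (v s) j x) ^ 2 + (pe p (w s) j x) ^ 2))) t 0.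
Proof.
  intros _ _ _ HN _ Hdt Hscheme t Ht.
  pose proof (Hscheme t Ht) as Hst. cbv zeta in Hst.
  destruct Hst as [Hv [Hw _]].
  pose proof (mass_rate_vanishes alpha beta N p xs (v t) (w t) (vt t) (wt t) (psi t)
                HN (Hv (v t)) (Hw (w t))) as Hmass.
  apply (deriv_within_congr 0 T
           (fun s => sumj N (fun j => cellint xs j (fun x => pe p (v s) j x ^ 2)
                                    + cellint xs j (fun x => pe p (w s) j x ^ 2))) _ t
           (sumj N (fun j => 2 * cellint xs j (fun x => pe p (vt t) j x * pe p (v t) j x)
                           + 2 * cellint xs j (fun x => pe p (wt t) j x * pe p (w t) j x)))).
  - intros s. apply sumj_ext. intros j _. unfold cellint.
    symmetry. apply RInt_plus_continuous; intros x;
      apply (continuous_pow_comp (pe p _ j)), continuous_pe.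
  - rewrite sumj_plus, !sumj_scal. lra.
  - apply deriv_within_sumj. intros j Hj.
    apply deriv_within_plus; apply deriv_within_RInt_pe_sqr; intros k Hk;
      apply (Hdt t j k Ht Hj Hk).
Qed.
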